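(* For each $\gamma$ obtained from a Frobenius array $\mu\in\mathcal{F}(\beta)$ as described (which is an $S_\beta$-partition), the array $\pi$ obtained by subtracting $\lfloor\frac{m+2-i}{2}\rfloor$ from each entry in the $i$-th row of $\gamma$ ($1\le i\le m+1$) is an $S_{\beta}$-partition.
   Context: Let $\beta=(b_1,\ldots,b_m)$ be a composition of $d$ and set $r_i=b_1+\cdots+b_i$ ($r_0=0$). The poset $S_\beta$ is $\bigcup_{l=1}^{m}\{(i,j): l\le i\le l+1,\ r_{l-1}+1\le j\le r_l\}$ with $(i_1,j_1)\le(i_2,j_2)$ iff $i_1\le i_2$ and $j_1\le j_2$; it has $m+1$ rows, and with its natural labeling an $S_\beta$-partition is an order-reversing map $S_\beta\to\mathbb{N}$ (nonnegative integers). A Frobenius symbol with $d$ columns is a two-rowed array $\left(\begin{smallmatrix}x_1&\cdots&x_d\\ y_1&\cdots&y_d\end{smallmatrix}\right)$ with $x_1>\cdots>x_d\ge0$, $y_1>\cdots>y_d\ge0$; a column is positive if $x_i-y_i\ge1$ and negative if $x_i-y_i\le0$; parity blocks are maximal sets of contiguous columns of the same parity. Subtracting $d-1,d-2,\ldots,0$ from the entries of columns $1,\ldots,d$ in each row gives a Frobenius array $\mu$ (rows weakly decreasing, parities unchanged). $\mathcal{F}(\beta)$ is the set of Frobenius arrays with $d$ columns and $m$ parity blocks $B_1,\ldots,B_m$, where the last block $B_m$ is positive and $B_i$ has $b_i$ columns. From $\mu\in\mathcal{F}(\beta)$, $\gamma$ is built by interchanging top and bottom entries in each negative block to get $\hat\mu$,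 then placing the $(i,j)$-th entry $\hat\mu_{i,j}$ at position $(i+l,j)$ of $S_\beta$, where $r_l<j\le r_{l+1}$. It is known that $\gamma$ is an $S_\beta$-partition whose columns are weakly decreasing, and strictly decreasing in columns coming from positive blocks of $\mu$. *)

From mathcomp Require Import all_boot all_order all_algebra.
Set Implicit Arguments. Unset Strict Implicit. Unset Printing Implicit Defensive.
Import Order.TTheory GRing.Theory Num.Theory.

(* A composition beta = (b_1,...,b_m) is a seq of positive naturals; d = sumn beta,
   m = size beta.  Columns are indexed 1..d, rows 1..m+1, blocks 1..m. *)
Definition composition (beta : seq nat) : bool := all (fun b => 0 < b) beta.

Definition rr (beta : seq nat) (l : nat) : nat := sumn (take l beta).

Definition in_block (beta : seq nat) (l j : nat) : bool :=
  (rr beta l.-1 < j) && (j <= rr beta l).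

(* Membership in the poset S_beta (positions (i,j) = (row, column)). *)
Definition inS (beta : seq nat) (p : nat * nat) : Prop :=
  exists l, [/\ 1 <= l <= size beta, l <= p.1 <= l.+1 & in_block beta l p.2].

Definition pos_le (p q : nat * nat) : Prop := p.1 <= q.1 /\ p.2 <= q.2.

(* S_beta-partition: order-reversing map S_beta -> N (values given in int,
   nonnegativity required explicitly). *)
Definition S_partition (beta : seq nat) (f : nat * nat -> int) : Prop :=
  (forall p, inS beta p -> (0 <= f p)%R) /\
  (forall p q, inS beta p -> inS beta q -> pos_le p q -> (f q <= f p)%R).

(* A Frobenius array with d columns: top row x, bottom row y (columns 1..d),
   nonnegative (nat) entries, rows weakly decreasing. *)
Definition frob_array (d : nat) (x y : nat -> nat) : Prop :=
  forall i j, 1 <= i -> i <= j -> j <= d -> x j <= x i /\ y j <= y i.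

Definition pos_col (x y : nat -> nat) (j : nat) : bool := y j < x j.

(* mu in F(beta): parity blocks are exactly B_l = columns r_{l-1}+1..r_l
   (constant parity on each, parity changes between consecutive ones = maximality),
   and the last block B_m is positive. *)
Definition in_F (beta : seq nat) (x y : nat -> nat) : Prop :=
  [/\ frob_array (sumn beta) x y,
      (forall l j j', 1 <= l <= size beta -> in_block beta l j -> in_block beta l j' ->
          pos_col x y j = pos_col x y j'),
      (forall l, 1 <= l < size beta ->
          pos_col x y (rr beta l) != pos_col x y (rr beta l).+1)
    & (0 < size beta -> pos_col x y (sumn beta))].

Definition neg_block (beta : seq nat) (x y : nat -> nat) (l : nat) : bool :=
  all (fun j => ~~ pos_col x y j) (iota (rr beta l.-1).+1 (nth 0 beta l.-1)).

(* g (as a function row -> column -> value) is the gamma built from mu: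
   hat mu swaps top/bottom in negative blocks, and hat mu_{i,j} is placed at
   position (i + l - 1, j) for column j in block l. *)
Definition gamma_of (beta : seq nat) (x y : nat -> nat) (g : nat -> nat -> nat) : Prop :=
  forall l j, 1 <= l <= size beta -> in_block beta l j ->
    g l j = (if neg_block beta x y l then y j else x j) /\
    g l.+1 j = (if neg_block beta x y l then x j else y j).

From mathcomp Require Import all_boot all_order all_algebra.
From mathcomp Require Import zify.
Import Order.TTheory GRing.Theory Num.Theory.

Set Implicit Arguments.
Unset Strict Implicit.
Unset Printing Implicit Defensive.

(* Parity blocks alternate in sign and the last one is positive, so block [l]
   is positive iff [m - l] is even.  After the swap in the negative blocks,
   row [i] of gamma therefore carries the top row of mu iff [m + 1 - i] is
   odd, and pi is given on all of S_beta by the single formula [pi_entry].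
   It decreases along rows because the rows of mu do, and one step down a
   column of block [l] because the shift [(m + 2 - i) %/ 2] drops by one
   exactly when that column is positive ([x j > y j]) and stays put when it
   is negative ([x j <= y j]).  Comparable cells of S_beta are joined by a
   staircase of such steps inside S_beta. *)

Section PrefixSums.
Variable s : seq nat.

Lemma rr_leq_sumn l : rr s l <= sumn s.
Proof. by rewrite /rr -{2}(cat_take_drop l s) sumn_cat leq_addr. Qed.

Lemma rr_mono : {homo rr s : l l' / l <= l'}.
Proof.
move=> l l' le_ll'; rewrite /rr -(take_takel s le_ll').
by rewrite -{2}(cat_take_drop l (take l' s)) sumn_cat leq_addr.
Qed.

Lemma rr_size : rr s (size s) = sumn s.
Proof. by rewrite /rr take_size. Qed.

Lemma rrS l : l < size s -> rr s l.+1 = rr s l + nth 0 s l.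
Proof. by move=> lt_ls; rewrite /rr (take_nth 0) // sumn_rcons. Qed.

Lemma mem_iota_block l k : 0 < l <= size s ->
  (k \in iota (rr s l.-1).+1 (nth 0 s l.-1)) = in_block s l k.
Proof. by case: l => // l /= lt_ls; rewrite mem_iota /in_block rrS //=; lia. Qed.

Lemma in_block_bounds l j : in_block s l j -> 0 < j <= sumn s.
Proof. by case/andP=> lt_rj le_jr; have := rr_leq_sumn l; lia. Qed.

Lemma inS_col_bounds p : inS s p -> 0 < p.2 <= sumn s.
Proof. by case=> l [_ _ /in_block_bounds]. Qed.

Hypothesis s_comp : composition s.

Lemma rr_ltS l : l < size s -> rr s l < rr s l.+1.
Proof.
move=> lt_ls; rewrite rrS // -[X in X < _]addn0 ltn_add2l.
by move/allP: s_comp; apply; apply: mem_nth.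
Qed.

Lemma in_block_last l : 0 < l <= size s -> in_block s l (rr s l).
Proof.
case: l => // l /= lt_ls; rewrite /in_block leqnn andbT.
exact: rr_ltS.
Qed.

Lemma in_block_first l : l < size s -> in_block s l.+1 (rr s l).+1.
Proof. by move=> lt_ls; rewrite /in_block ltnSn; apply: rr_ltS. Qed.

End PrefixSums.

Lemma alternating_last_true (c : nat -> bool) m :
  c m -> (forall l, 0 < l < m -> c l != c l.+1) ->
  forall l, 0 < l <= m -> c l = ~~ odd (m - l).
Proof.
move=> cm alt; suff alt_from : forall k l, 0 < l -> l + k = m -> c l = ~~ odd k.
  by move=> l /andP[l_gt0 le_lm]; apply: alt_from; rewrite ?subnKC.
elim=> [|k IHk] l l_gt0 def_m; first by move: cm; rewrite -def_m addn0.
have /alt : 0 < l < m by rewrite l_gt0 -def_m addnS ltnS leq_addr.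
by rewrite (IHk l.+1) ?addSnnS // oddS negbK; case: (c l); case: (odd k).
Qed.

Definition gamma_entry (m : nat) (x y : nat -> nat) (i j : nat) : nat :=
  if odd (m.+1 - i) then x j else y j.

Definition pi_entry (m : nat) (x y : nat -> nat) (i j : nat) : int :=
  ((gamma_entry m x y i j)%:Z - ((m + 2 - i) %/ 2)%:Z)%R.

Lemma pi_entry_homo_col d m x y i j j' : frob_array d x y ->
  0 < j -> j <= j' <= d -> (pi_entry m x y i j' <= pi_entry m x y i j)%R.
Proof.
move=> frob j_gt0 /andP[le_jj' le_j'd].
have [le_x le_y] := frob j j' j_gt0 le_jj' le_j'd.
by rewrite /pi_entry /gamma_entry lerD2r lez_nat; case: ifP.
Qed.

Lemma pi_entry_stepS m x y l j : l <= m -> pos_col x y j = ~~ odd (m - l) ->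
  (pi_entry m x y l.+1 j <= pi_entry m x y l j)%R.
Proof.
rewrite /pi_entry /gamma_entry /pos_col => le_lm.
have -> : m.+1 - l = (m - l).+1 by lia.
have -> : m + 2 - l.+1 = (m - l).+1 by lia.
have -> : m + 2 - l = (m - l).+2 by lia.
rewrite subSS oddS; have := odd_double_half (m - l); rewrite -divn2.
case: (odd (m - l)) => /= half_ml sign_j;
  by rewrite lerBlDr addrAC lerBrDr -!PoszD lez_nat; lia.
Qed.

Section GammaOfFrobeniusArray.
Variables (beta : seq nat) (x y : nat -> nat).
Hypotheses (beta_comp : composition beta) (mu_F : in_F beta x y).
Let m := size beta.

Lemma pos_col_block l j : 0 < l <= m -> in_block beta l j ->
  pos_col x y j = ~~ odd (m - l).
Proof.
case: mu_F => _ sign_const sign_alt last_pos lm jl.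
rewrite (sign_const l j (rr beta l)) ?in_block_last //.
apply: (@alternating_last_true (fun l => pos_col x y (rr beta l))) => //=.
  by rewrite rr_size; apply: last_pos; case/andP: lm; apply: leq_trans.
move=> k /andP[k_gt0 lt_km]; have /sign_alt : 0 < k < m by rewrite k_gt0.
by rewrite (sign_const k.+1 (rr beta k).+1 (rr beta k.+1)) ?in_block_first ?in_block_last.
Qed.

Lemma neg_block_odd l : 0 < l <= m -> neg_block beta x y l = odd (m - l).
Proof.
move=> lm; rewrite /neg_block; case: (boolP (odd (m - l))) => [odd_ml | even_ml].
  by apply/allP => j; rewrite mem_iota_block // => /(pos_col_block lm)->; rewrite negbK.
apply/negbTE/negP => /allP/(_ (rr beta l)).
rewrite mem_iota_block // (pos_col_block lm) ?in_block_last //.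
by rewrite negbK (negbTE even_ml) => /(_ isT).
Qed.

Lemma gamma_inS g i j : gamma_of beta x y g -> inS beta (i, j) ->
  g i j = gamma_entry m x y i j.
Proof.
move=> gam [l [lm /= /andP[le_li le_iSl] jl]].
have [g_l g_lS] := gam l j lm jl; rewrite (neg_block_odd lm) in g_l g_lS.
rewrite /gamma_entry; have [-> | ->] : i = l \/ i = l.+1 by lia.
  by rewrite g_l subSn ?oddS; case: odd; case/andP: lm.
by rewrite g_lS subSS.
Qed.

Lemma pi_step_down i j i' j' :
  inS beta (i, j) -> inS beta (i', j') -> i < i' -> j <= j' ->
  exists k, [/\ inS beta (i.+1, k), k <= j'
              & (pi_entry m x y i.+1 k <= pi_entry m x y i j)%R].
Proof.
move=> [l [lm /= /andP[le_li le_iSl] jl]] [l' [lm' /= /andP[_ le_i'Sl'] jl']] lt_ii' le_jj'.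
have [frob _ _ _] := mu_F.
move: lt_ii'; have [] : i = l \/ i = l.+1 by lia.
all: move=> -> lt_ii'.
  exists j; split => //; first by exists l; rewrite /= leqnn leqnSn.
  by apply: pi_entry_stepS; [case/andP: lm | apply: pos_col_block].
have lt_ll' : l < l' by lia.
have lt_lm : l < m by case/andP: lm'; lia.
have block_lS := in_block_first beta_comp lt_lm.
exists (rr beta l).+1; split.
- by exists l.+1; split => //=; lia.
- by have := rr_mono beta (_ : l <= l'.-1); case/andP: jl'; lia.
apply: le_trans (pi_entry_stepS _ (pos_col_block _ block_lS)) _ => //.
apply: pi_entry_homo_col frob _ _; first by case/andP: (in_block_bounds jl).
by have := in_block_bounds block_lS; case/andP: jl; lia.
Qed.

Lemma pi_antitone p q : inS beta p -> inS beta q -> pos_le p q ->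
  (pi_entry m x y q.1 q.2 <= pi_entry m x y p.1 p.2)%R.
Proof.
have [frob _ _ _] := mu_F.
case: p q => [i j] [i' j'] Sp Sq [/= le_ii' le_jj'].
move def_n: (i' - i) => n; elim: n i j def_n Sp le_ii' le_jj' => [|n IHn] i j.
  move=> def_n Sp le_ii' le_jj'; have -> : i' = i by lia.
  apply: pi_entry_homo_col frob _ _; first by case/andP: (inS_col_bounds Sp).
  by rewrite le_jj'; case/andP: (inS_col_bounds Sq).
move=> def_n Sp le_ii' le_jj'; have lt_ii' : i < i' by lia.
have [k [Sk le_kj' pi_k]] := pi_step_down Sp Sq lt_ii' le_jj'.
by apply: le_trans pi_k; apply: IHn => //; lia.
Qed.

Lemma pi_entry_S_partition : S_partition beta (fun p => pi_entry m x y p.1 p.2).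
Proof.
split=> [p Sp|]; last exact: pi_antitone.
have [m_gt0 le_p_bot] : 0 < m /\ pos_le p (m.+1, sumn beta).
  case: Sp => l [/andP[l_gt0 le_lm] /andP[_ le_iSl] /in_block_bounds/andP[_ le_jd]].
  by split; [apply: leq_trans le_lm | split=> //=; lia].
have Sbot : inS beta (m.+1, sumn beta).
  exists m; split; rewrite /= ?leqnn ?leqnSn ?m_gt0 //.
  by rewrite -rr_size; apply: (in_block_last beta_comp); rewrite m_gt0 /=.
apply: le_trans (pi_antitone Sp Sbot le_p_bot).
by rewrite /pi_entry /gamma_entry subnn /= (_ : m + 2 - m.+1 = 1) ?subr0; lia.
Qed.

End GammaOfFrobeniusArray.

Lemma S_partition_eq_on beta (f f' : nat * nat -> int) :
  (forall p, inS beta p -> f p = f' p) -> S_partition beta f -> S_partition beta f'.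
Proof.
move=> eq_ff' [f_ge0 f_anti]; split=> [p Sp | p q Sp Sq le_pq]; rewrite -!eq_ff' //.
  exact: f_ge0.
exact: f_anti.
Qed.

Theorem lemma4p4 (beta : seq nat) (x y : nat -> nat) (g : nat -> nat -> nat) :
  composition beta -> in_F beta x y -> gamma_of beta x y g ->
  S_partition beta
    (fun p => ((g p.1 p.2)%:Z - ((size beta + 2 - p.1) %/ 2)%:Z)%R).
Proof.
move=> beta_comp mu_F gam.
apply: S_partition_eq_on (pi_entry_S_partition beta_comp mu_F) => -[i j] Sp.
by rewrite /pi_entry (gamma_inS beta_comp mu_F gam Sp).
Qed.
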